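(* Let $\beta\in\mathbb{C}$ with $|\beta|=1$, $m\in\mathrm{Hol}(\mathbb{D})$, $m\not\equiv0$, $T:\mathrm{Hol}(\mathbb{D})\to\mathrm{Hol}(\mathbb{D})$ given by $(Tf)(z)=m(z)f(\beta z)$, and let $T_0$ be the restriction of $T$ to $\mathrm{Hol}_0(\mathbb{D})=\{f\in\mathrm{Hol}(\mathbb{D}):f(0)=0\}$. Then (a) $m(0)\in\sigma(T)$; (b) $\rho(T)\subset\rho(T_0)$; (c) $\rho(T_0)\subset\rho(T)\cup\{m(0)\}$.
   Context: $\mathbb{D}$ is the open unit disc, $\mathrm{Hol}(\mathbb{D})$ the space of holomorphic functions on $\mathbb{D}$. For a linear operator $S$ on a space $Y$, $\rho(S)$ is the set of $\lambda\in\mathbb{C}$ with $\lambda\mathrm{Id}-S$ bijective on $Y$ and $\sigma(S)=\mathbb{C}\setminus\rho(S)$. *)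

From HB Require Import structures.
From mathcomp Require Import all_boot all_order all_algebra.
From mathcomp Require Import all_classical all_reals all_analysis.
From mathcomp Require Import complex.
Set Implicit Arguments. Unset Strict Implicit. Unset Printing Implicit Defensive.
Import Order.TTheory GRing.Theory Num.Theory.
Import numFieldNormedType.Exports.
Local Open Scope ring_scope.
Local Open Scope complex_scope.

Section Hol.
Variable R : realType.
Local Notation C := (complex R).

(* Functions are
   represented as C -> C; their values off the disc are irrelevant. *)
Definition hol_disc (f : C -> C) : Prop :=
  forall z : C, `|z| < 1 -> derivable (f : C^o -> C^o) z 1.

Definition eq_disc (f g : C -> C) : Prop :=
  forall z : C, `|z| < 1 -> f z = g z.

Definition hol0_disc (f : C -> C) : Prop := hol_disc f /\ f 0 = 0.

Definition resolvent (Y : (C -> C) -> Prop) (S : (C -> C) -> (C -> C))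
  (lam : C) : Prop :=
  (forall f1 f2, Y f1 -> Y f2 ->
     eq_disc (fun z => lam * f1 z - S f1 z) (fun z => lam * f2 z - S f2 z) ->
     eq_disc f1 f2) /\
  (forall g, Y g -> exists2 f, Y f & eq_disc (fun z => lam * f z - S f z) g).

Definition spectrum Y S (lam : C) : Prop := ~ resolvent Y S lam.

Definition wcomp (m : C -> C) (beta : C) (f : C -> C) : C -> C :=
  fun z => m z * f (beta * z).
End Hol.

(* Since beta * 0 = 0, evaluating (lam - T) f at 0 gives (lam - m 0) * f 0.
   For lam = m 0 the whole range of lam - T therefore lies in Hol_0, so the
   constant 1 is missed.  For lam <> m 0, Hol = Hol_0 + constants, and
   bijectivity on Hol and on Hol_0 are equivalent: a difference f1 - f2 with
   (lam - T) f1 = (lam - T) f2 vanishes at 0, and (lam - T) f = g is solved in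
   Hol by subtracting from g the image (lam - m) c of the constant
   c = g 0 / (lam - m 0) and solving in Hol_0. *)
From HB Require Import structures.
From mathcomp Require Import all_boot all_order all_algebra.
From mathcomp Require Import all_classical all_reals all_analysis.
From mathcomp Require Import complex.
From mathcomp Require Import ring.
Import Order.TTheory GRing.Theory Num.Theory.
Import numFieldNormedType.Exports.
Local Open Scope ring_scope.

Section HolDisc.
Context {R : realType}.
Local Notation C := (complex R).

Lemma hol_disc_cst (c : C) : hol_disc (fun _ => c).
Proof. by move=> z _; exact: derivable_cst. Qed.

Lemma hol_discD {f g : C -> C} : hol_disc f -> hol_disc g ->
  hol_disc (fun z => f z + g z).
Proof. by move=> hf hg z hz; exact: derivableD (hf z hz) (hg z hz). Qed.

Lemma hol_discB {f g : C -> C} : hol_disc f -> hol_disc g ->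
  hol_disc (fun z => f z - g z).
Proof. by move=> hf hg z hz; exact: derivableB (hf z hz) (hg z hz). Qed.

Lemma hol_discMr {f : C -> C} (c : C) : hol_disc f ->
  hol_disc (fun z => f z * c).
Proof.
move=> hf z hz.
have -> : (fun z => f z * c) = (fun z => c *: (f z : C^o)).
  by apply: funext => w; rewrite mulrC.
exact: (@derivableZ _ C^o C^o f c z 1 (hf z hz)).
Qed.

Lemma norm0_lt1 : `|0 : C| < 1.
Proof. by rewrite normr0 ltr01. Qed.

End HolDisc.

Section WeightedComposition.
Variables (R : realType) (m : complex R -> complex R) (beta : complex R).
Hypothesis hol_m : hol_disc m.
Local Notation C := (complex R).
Local Notation T := (wcomp m beta).

Definition sub_wcomp (lam : C) (f : C -> C) : C -> C :=
  fun z => lam * f z - T f z.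

Definition injective_disc (Y : (C -> C) -> Prop) (S : (C -> C) -> C -> C) :=
  forall f1 f2, Y f1 -> Y f2 -> eq_disc (S f1) (S f2) -> eq_disc f1 f2.

Definition onto_disc (Y : (C -> C) -> Prop) (S : (C -> C) -> C -> C) :=
  forall g, Y g -> exists2 f, Y f & eq_disc (S f) g.

Lemma resolventE Y lam :
  resolvent Y T lam <-> injective_disc Y (sub_wcomp lam) /\ onto_disc Y (sub_wcomp lam).
Proof. by []. Qed.

Lemma sub_wcomp_at0 lam f : sub_wcomp lam f 0 = (lam - m 0) * f 0.
Proof. by rewrite /sub_wcomp /wcomp mulr0 mulrBl. Qed.

Lemma sub_wcompB lam f1 f2 z :
  sub_wcomp lam (fun w => f1 w - f2 w) z = sub_wcomp lam f1 z - sub_wcomp lam f2 z.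
Proof. by rewrite /sub_wcomp /wcomp; ring. Qed.

Lemma sub_wcompD_cst lam f c z :
  sub_wcomp lam (fun w => f w + c) z = sub_wcomp lam f z + (lam - m z) * c.
Proof. by rewrite /sub_wcomp /wcomp; ring. Qed.

Lemma spectrum_wcomp_m0 : spectrum (@hol_disc R) T (m 0).
Proof.
move=> /resolventE[_ onto]; have [f _ Ef] := onto (fun _ => 1) (hol_disc_cst 1).
have := Ef 0 norm0_lt1; rewrite sub_wcomp_at0 subrr mul0r => /eqP.
by rewrite eq_sym oner_eq0.
Qed.

Lemma resolvent_wcomp_hol0 lam :
  resolvent (@hol_disc R) T lam -> resolvent (@hol0_disc R) T lam.
Proof.
move=> /resolventE[inj onto]; split=> [f1 f2 [hf1 _] [hf2 _]|g [hg g0]].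
  exact: inj.
have lam_m0 : lam - m 0 != 0.
  by rewrite subr_eq0; apply/eqP => lamE; apply: spectrum_wcomp_m0; rewrite -lamE.
have [f hf Ef] := onto g hg; exists f => //; split=> //.
have := Ef 0 norm0_lt1; rewrite sub_wcomp_at0 g0 => /eqP.
by rewrite mulf_eq0 (negbTE lam_m0) => /eqP.
Qed.

Lemma injective_sub_wcomp_hol lam : lam != m 0 ->
  injective_disc (@hol0_disc R) (sub_wcomp lam) ->
  injective_disc (@hol_disc R) (sub_wcomp lam).
Proof.
rewrite -subr_eq0 => lam_m0 inj f1 f2 hf1 hf2 Ef.
have Ediff : eq_disc (sub_wcomp lam (fun w => f1 w - f2 w)) (sub_wcomp lam (fun=> 0)).
  by move=> z hz; rewrite sub_wcompB Ef // subrr /sub_wcomp /wcomp !mulr0 subr0.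
have hdiff : hol0_disc (fun w => f1 w - f2 w).
  split; first exact: hol_discB.
  have := sub_wcomp_at0 lam (fun w => f1 w - f2 w).
  rewrite sub_wcompB (Ef 0 norm0_lt1) subrr => /esym/eqP.
  by rewrite mulf_eq0 (negbTE lam_m0) => /eqP.
have hzero : hol0_disc (fun=> 0 : C) by split; first exact: hol_disc_cst.
move=> z /(inj _ _ hdiff hzero Ediff z) /eqP.
by rewrite subr_eq0 => /eqP.
Qed.

Lemma onto_sub_wcomp_hol lam : lam != m 0 ->
  onto_disc (@hol0_disc R) (sub_wcomp lam) -> onto_disc (@hol_disc R) (sub_wcomp lam).
Proof.
rewrite -subr_eq0 => lam_m0 onto g hg; pose c := g 0 / (lam - m 0).
have hg0 : hol0_disc (fun z => g z - (lam - m z) * c).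
  split; last by rewrite /c mulrC divfK // subrr.
  exact: hol_discB hg (hol_discMr c (hol_discB (hol_disc_cst lam) hol_m)).
have [f [hf _] Ef] := onto _ hg0.
exists (fun z => f z + c); first exact: hol_discD hf (hol_disc_cst c).
by move=> z hz; rewrite sub_wcompD_cst Ef // subrK.
Qed.

Lemma resolvent_hol0_wcomp lam : lam != m 0 ->
  resolvent (@hol0_disc R) T lam -> resolvent (@hol_disc R) T lam.
Proof.
move=> lam_m0 /resolventE[inj onto]; apply/resolventE; split.
- exact: injective_sub_wcomp_hol.
- exact: onto_sub_wcomp_hol.
Qed.

End WeightedComposition.

Theorem lemma2p4 (R : realType) (beta : complex R) (m : complex R -> complex R) :
  `|beta| = 1 ->
  hol_disc m ->
  ~ eq_disc m (fun _ => 0) ->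
  [/\ spectrum (@hol_disc R) (wcomp m beta) (m 0),
      (forall lam, resolvent (@hol_disc R) (wcomp m beta) lam ->
                   resolvent (@hol0_disc R) (wcomp m beta) lam) &
      (forall lam, resolvent (@hol0_disc R) (wcomp m beta) lam ->
                   resolvent (@hol_disc R) (wcomp m beta) lam \/ lam = m 0)].
Proof.
move=> _ hol_m _; split.
- exact: spectrum_wcomp_m0.
- exact: resolvent_wcomp_hol0.
- move=> lam res0; have [->|lam_m0] := eqVneq lam (m 0); first by right.
  by left; exact: resolvent_hol0_wcomp res0.
Qed.
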